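(* Let $\lambda$ be a dominant integral weight of $\mathfrak{sl}_{r+1}$ and $b\in\mathcal B(\lambda+\rho)$. For $1\le j\le i\le r$, the entry $a_{i,j}$ of the BZL path $\psi_{\mathbf i}(b)$ is circled by rule (C-I) if and only if the corresponding entry $\mathbf a_{i-j+1,i}$ of $\mathbf a(b)$ is circled by rule (C-II).
   Context: Fix $r\ge1$ and $\mathfrak g=\mathfrak{sl}_{r+1}$ with index set $I=\{1,\dots,r\}$, simple roots $\alpha_1,\dots,\alpha_r$, fundamental weights $\omega_1,\dots,\omega_r$, $N=r(r+1)/2$, and $\rho=\sum_i\omega_i$. For a dominant integral weight $\mu=\sum_i m_i\omega_i$, $\mathcal B(\mu)$ is identified (Kashiwara–Nakashima) with the set of semistandard Young tableaux with entries in $\{1,\dots,r+1\}$ of the shape having $m_i$ columns of height $i$; an entry equal to $k$ is a $k$-box. A tableau is identified with the tensor product of its entries read column by column from right to left, each column top to bottom, and $\tilde e_i,\tilde f_i$ act by the signature rule: for each factor write $-$ if it equals $i+1$, $+$ if it equals $i$; repeatedly cancel adjacent $+-$ pairs; $\tilde e_i$ changes the factor of the rightmost remaining $-$ from $i+1$ to $i$ (giving $0$ if none), $\tilde f_i$ changes the factor of the leftmost remaining $+$ from $i$ to $i+1$ (giving $0$ if none). Fix the long word $\mathbf i=(i_1,\dots,i_N)=(1,2,1,3,2,1,\dots,r,\dots,2,1)$. The BZL path $\psi_{\mathbf i}(b)=(a_1,\dots,a_N)$: $a_k$ is maximal with $\tilde e_{i_k}^{a_k}\cdots\tilde e_{i_1}^{a_1}b\ne0$.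 Triangular form: $a_{i,j}=a_{i(i-1)/2+j}$ for $1\le j\le i\le r$. Rule (C-I): circle $a_{i,j}$ if $a_{i,j}=a_{i,j+1}$, with the convention $a_{i,i+1}=0$. For $1\le i\le j\le r$, $\mathbf a_{i,j}$ is the number of $(j+1)$-boxes in rows $1$ through $i$ of $b$, with convention $\mathbf a_{0,j}=0$; $\mathbf a(b)=(\mathbf a_{i,j})$. Rule (C-II): circle $\mathbf a_{i,j}$ if $\mathbf a_{i,j}=\mathbf a_{i-1,j}$. *)

From mathcomp Require Import all_boot.
Set Implicit Arguments. Unset Strict Implicit. Unset Printing Implicit Defensive.

(* A tableau is the list of its columns, from left to right; each column is
   listed from top to bottom.  Row k (1-based) of a column c is nth 0 c k.-1. *)
Definition tableau := seq (seq nat).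

(* Column heights (left to right) of the shape of lambda + rho, where
   lambda = sum_i lam i * omega_i (i = 1..r): lam i + 1 columns of height i,
   taller columns to the left. *)
Definition shape_lr (r : nat) (lam : nat -> nat) : seq nat :=
  flatten [seq nseq (lam h).+1 h | h <- rev (iota 1 r)].

(* Semistandard Young tableaux of a given column shape with entries in
   {1, ..., r+1}: the Kashiwara--Nakashima model of B(mu). *)
Definition is_SSYT (r : nat) (sh : seq nat) (T : tableau) : Prop :=
  [/\ map size T = sh,
      (forall c, c \in T -> forall x, x \in c -> 1 <= x <= r.+1),
      (forall c, c \in T -> sorted ltn c) &
      (forall p q k, p < q < size T -> k < size (nth [::] T q) ->
         nth 0 (nth [::] T p) k <= nth 0 (nth [::] T q) k)].

Definition in_B_lam_rho (r : nat) (lam : nat -> nat) (T : tableau) : Prop :=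
  is_SSYT r (shape_lr r lam) T.

Definition read_word (T : tableau) : seq nat := flatten (rev T).

(* Signature of a word for index i: for each factor equal to i (sign +,
   encoded true) or i+1 (sign -, encoded false), record the sign and the
   position of the factor. *)
Definition signature (i : nat) (w : seq nat) : seq (bool * nat) :=
  [seq (p.1 == i, p.2) | p <- zip w (iota 0 (size w)) & (p.1 == i) || (p.1 == i.+1)].

Fixpoint cancel1 (s : seq (bool * nat)) : seq (bool * nat) :=
  match s with
  | (true, _) :: (false, _) :: t => t
  | x :: t => x :: cancel1 t
  | [::] => [::]
  end.

(* Repeatedly cancel adjacent (+,-) pairs (size s iterations suffice, each
   effective iteration removes two signs). *)
Definition reduced_signature (i : nat) (w : seq nat) : seq (bool * nat) :=
  let s := signature i w in iter (size s) cancel1 s.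

(* e_i on words: change the factor of the rightmost remaining '-' from i+1
   to i; None encodes 0. *)
Definition e_word (i : nat) (w : seq nat) : option (seq nat) :=
  let minus := [seq q.2 | q <- reduced_signature i w & ~~ q.1] in
  if minus is [::] then None else Some (set_nth 0 w (last 0 minus) i).

Definition e_tab (i : nat) (T : tableau) : option tableau :=
  omap (fun w => rev (reshape (map size (rev T)) w)) (e_word i (read_word T)).

Definition e_iter (i a : nat) (T : tableau) : option tableau :=
  iter a (obind (e_tab i)) (Some T).

(* The maximal a with e_i^a T <> 0.  Each application of e_i removes one
   (i+1)-entry, so all such a are <= the number of boxes. *)
Definition eps_max (i : nat) (T : tableau) : nat :=
  \max_(a < (size (read_word T)).+1 | e_iter i a T != None) a.

Definition long_word (r : nat) : seq nat :=
  flatten [seq rev (iota 1 k) | k <- iota 1 r].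

Fixpoint bzl_aux (ii : seq nat) (T : tableau) : seq nat :=
  match ii with
  | [::] => [::]
  | i :: ii' =>
      let a := eps_max i T in
      a :: bzl_aux ii' (odflt T (e_iter i a T))
  end.

Definition bzl (r : nat) (T : tableau) : seq nat := bzl_aux (long_word r) T.

(* Triangular form: a_{i,j} = a_{i(i-1)/2 + j}, 1 <= j <= i <= r, with the
   convention a_{i,i+1} = 0. *)
Definition bzl_entry (r : nat) (T : tableau) (i j : nat) : nat :=
  if (1 <= j <= i) then nth 0 (bzl r T) ((i * i.-1) %/ 2 + j).-1 else 0.

Definition circled_CI (r : nat) (T : tableau) (i j : nat) : bool :=
  bzl_entry r T i j == bzl_entry r T i j.+1.

Definition bold_a (T : tableau) (i j : nat) : nat :=
  \sum_(c <- T) count_mem j.+1 (take i c).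

Definition circled_CII (T : tableau) (i j : nat) : bool :=
  bold_a T i j == bold_a T i.-1 j.

(* Everything rests on the explicit formula  a_{i,j} = bold_a T (i-j+1) i
   for the BZL path along (1, 2,1, ..., r,...,2,1): comparing neighbouring
   entries then gives the theorem, the convention a_{i,i+1} = 0 matching
   bold_a T 0 i = 0.

   The formula is obtained by following T through the blocks of the long
   word.  Let lowered k M T replace every entry x <= k in row p by p and every
   entry k+1 in row p by max p M.  Then lowered 1 2 T = T, the end
   lowered k 1 T of block k is the start lowered (k+1) (k+2) T of block k+1,
   and (lowered_step) applying e_m maximally to lowered k (m+1) T takes
   exactly bold_a T m k steps and yields lowered k m T.  For the last fact the
   columns are cut into those reaching row m with an entry <= k, whose
   m-signs cancel out, and the others, which contain no letter m and whose
   letters m+1 are the entries k+1 of rows 1..m; the signature rule then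
   lowers exactly these letters. *)

From mathcomp Require Import all_boot zify.
Set Implicit Arguments. Unset Strict Implicit. Unset Printing Implicit Defensive.

(* A sign sequence (true = '+', false = '-') in which every '-' is cancelled
   against a '+' placed somewhere to its left; it is a sufficient condition
   for the reduced signature to contain no '-'. *)
Fixpoint minus_matched (s : seq bool) : bool :=
  match s with
  | [::] => true
  | true :: false :: t => minus_matched t
  | true :: t => minus_matched t
  | false :: _ => false
  end.

Lemma minus_matched_plus s : minus_matched s -> minus_matched (true :: s).
Proof. by case: s => [|[] t]. Qed.

Lemma minus_matched_cat s t :
  minus_matched s -> minus_matched t -> minus_matched (s ++ t).
Proof.
move: (leqnn (size s)); move: {2}(size s) => n.
elim: n s => [|n IH] [|[] s] //= Hs.
case: s Hs => [|[] s] //= Hs Ms Mt.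
- exact: minus_matched_plus.
- exact: (IH (true :: s)).
- by apply: IH => //; apply: ltnW.
Qed.

Lemma minus_matched_flatten (ss : seq (seq bool)) :
  all minus_matched ss -> minus_matched (flatten ss).
Proof. by elim: ss => //= s ss IH /andP[Hs Hss]; apply: minus_matched_cat (IH Hss). Qed.

Lemma cancel1_matched (s : seq (bool * nat)) : minus_matched (map fst s) ->
  minus_matched (map fst (cancel1 s)) /\
  count (fun q => ~~ q.1) (cancel1 s) = (count (fun q => ~~ q.1) s).-1.
Proof.
elim: s => [|[[] n] [|[[] n'] t] IH] //= M.
by have [M1 ->] := IH M; split => //; apply: minus_matched_plus.
Qed.

Lemma iter_cancel1_matched n (s : seq (bool * nat)) : minus_matched (map fst s) ->
  count (fun q => ~~ q.1) (iter n cancel1 s) = count (fun q => ~~ q.1) s - n.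
Proof.
move=> M; suff: minus_matched (map fst (iter n cancel1 s)) /\
  count (fun q => ~~ q.1) (iter n cancel1 s) = count (fun q => ~~ q.1) s - n by case.
elim: n => [|n [M' C]] /=; first by rewrite subn0.
by have [-> ->] := cancel1_matched M'; rewrite C subnS.
Qed.

Lemma iter_cancel1_minus_prefix n (F G : seq (bool * nat)) :
  all (fun q => ~~ q.1) F -> iter n cancel1 (F ++ G) = F ++ iter n cancel1 G.
Proof.
move=> HF; elim: n => //= n ->.
elim: F HF => [|[b m] F IH] //= /andP[Hb HF].
by case: b Hb => //= _; rewrite IH.
Qed.

Definition sign_word (i : nat) (w : seq nat) : seq bool :=
  [seq x == i | x <- w & (x == i) || (x == i.+1)].

Definition signature_from (i : nat) (w : seq nat) (s0 : nat) : seq (bool * nat) :=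
  [seq (p.1 == i, p.2) | p <- zip w (iota s0 (size w)) & (p.1 == i) || (p.1 == i.+1)].

Lemma sign_word_cons i x w : sign_word i (x :: w) =
  (if (x == i) || (x == i.+1) then [:: x == i] else [::]) ++ sign_word i w.
Proof. by rewrite /sign_word /=; case: ifP. Qed.

Lemma sign_word_cat i u v : sign_word i (u ++ v) = sign_word i u ++ sign_word i v.
Proof. by rewrite /sign_word filter_cat map_cat. Qed.

Lemma sign_word_flatten i (ws : seq (seq nat)) :
  sign_word i (flatten ws) = flatten (map (sign_word i) ws).
Proof. by elim: ws => //= w ws IH; rewrite sign_word_cat IH. Qed.

Lemma signature_from_cons i x w s0 : signature_from i (x :: w) s0 =
  (if (x == i) || (x == i.+1) then [:: (x == i, s0)] else [::]) ++
  signature_from i w s0.+1.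
Proof. by rewrite /signature_from /=; case: ifP. Qed.

Lemma signature_from_cat i u v s0 : signature_from i (u ++ v) s0 =
  signature_from i u s0 ++ signature_from i v (s0 + size u).
Proof.
elim: u s0 => [|x u IH] s0 /=; first by rewrite addn0.
by rewrite !signature_from_cons IH addSnnS catA.
Qed.

Lemma signature_from_signs i w s0 : map fst (signature_from i w s0) = sign_word i w.
Proof.
elim: w s0 => [|x w IH] s0 //=.
by rewrite signature_from_cons sign_word_cons; case: ifP => _ /=; rewrite IH.
Qed.

Lemma signature_from_minus i u s0 :
  i \notin u -> all (fun q => ~~ q.1) (signature_from i u s0).
Proof.
elim: u s0 => [|x u IH] s0 //=.
rewrite in_cons negb_or signature_from_cons => /andP[Hx Hu].
by rewrite all_cat IH // andbT; case: ifP => //= _; rewrite eq_sym Hx.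
Qed.

Lemma signature_from_nil i u s0 :
  i \notin u -> i.+1 \notin u -> signature_from i u s0 = [::].
Proof.
elim: u s0 => [|x u IH] s0 //=.
rewrite !in_cons !negb_or signature_from_cons => /andP[Hx Hu] /andP[Hx1 Hu1].
by rewrite IH // eq_sym (negbTE Hx) eq_sym (negbTE Hx1).
Qed.

Lemma reduced_minus_positions i u v : i \notin u -> minus_matched (sign_word i v) ->
  [seq q.2 | q <- reduced_signature i (u ++ v) & ~~ q.1] =
  [seq q.2 | q <- signature_from i u 0].
Proof.
move=> Hu Hv; rewrite /reduced_signature.
have -> : signature i (u ++ v) = signature_from i (u ++ v) 0 by [].
rewrite signature_from_cat iter_cancel1_minus_prefix ?signature_from_minus //.
rewrite filter_cat map_cat (all_filterP (signature_from_minus 0 Hu)).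
set G := signature_from i v _; set n := size _.
have GM : minus_matched (map fst G) by rewrite signature_from_signs.
suff -> : [seq q <- iter n cancel1 G | ~~ q.1] = [::] by rewrite cats0.
apply/eqP; rewrite -size_eq0 size_filter iter_cancel1_matched // subn_eq0 /n size_cat.
exact: leq_trans (count_size _ _) (leq_addl _ _).
Qed.

Lemma e_word_stop i u v : i \notin u -> i.+1 \notin u ->
  minus_matched (sign_word i v) -> e_word i (u ++ v) = None.
Proof. by move=> Hu Hu1 Hv; rewrite /e_word reduced_minus_positions // signature_from_nil. Qed.

Lemma e_word_lower i u1 u2 v : i \notin u1 -> i \notin u2 -> i.+1 \notin u2 ->
  minus_matched (sign_word i v) ->
  e_word i (u1 ++ i.+1 :: u2 ++ v) = Some (u1 ++ i :: u2 ++ v).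
Proof.
move=> H1 H2 H21 Hv.
have Hu : i \notin u1 ++ i.+1 :: u2.
  by rewrite mem_cat in_cons (negbTE H1) (negbTE H2) (ltn_eqF (ltnSn i)).
rewrite -cat_cons catA /e_word reduced_minus_positions //.
rewrite signature_from_cat signature_from_cons (signature_from_nil _ H2 H21).
rewrite eqxx orbT cats0 eq_sym (ltn_eqF (ltnSn i)) map_cat last_cat /= add0n.
have set_mid (w1 w2 : seq nat) x y : set_nth 0 (w1 ++ x :: w2) (size w1) y = w1 ++ y :: w2.
  by elim: w1 => //= z w1 ->.
by case: [seq q.2 | q <- signature_from i u1 0] => [|a l] /=; rewrite -catA set_mid.
Qed.

Lemma read_word_shape_inj T1 T2 :
  read_word T1 = read_word T2 -> shape T1 = shape T2 -> T1 = T2.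
Proof.
have unread T : rev (reshape (shape (rev T)) (read_word T)) = T.
  by rewrite /read_word flattenK revK.
move=> R S; rewrite -(unread T1) -(unread T2) R.
by rewrite /shape !map_rev -!/(shape _) S.
Qed.

Lemma e_tab_word i T w' : e_word i (read_word T) = Some w' ->
  size w' = size (read_word T) ->
  exists T', [/\ e_tab i T = Some T', read_word T' = w' & shape T' = shape T].
Proof.
move=> E S; have Hs : size w' = sumn (shape (rev T)).
  by rewrite S /read_word size_flatten.
rewrite /e_tab E /=; eexists; split; first by [].
  by rewrite /read_word revK reshapeKr // Hs.
by rewrite /shape map_rev -/(shape _) reshapeKl ?Hs // map_rev revK.
Qed.

Definition lower_letter (i y : nat) : nat := if y == i.+1 then i else y.

Lemma map_lower_letter_id i u : i.+1 \notin u -> map (lower_letter i) u = u.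
Proof.
move=> H; rewrite -[RHS]map_id; apply/eq_in_map => y Hy; rewrite /lower_letter.
by case: eqP Hy => // ->; rewrite (negbTE H).
Qed.

Lemma split_last_occurrence (x : nat) u :
  x \in u -> exists u1 u2, u = u1 ++ x :: u2 /\ x \notin u2.
Proof.
elim/last_ind: u => [|u y IH] //; rewrite -cats1 mem_cat inE.
case: (eqVneq y x) => [-> _|Hy]; first by exists u, [::].
rewrite orbF => /IH [u1 [u2 [-> H2]]]; exists u1, (u2 ++ [:: y]).
by rewrite -catA mem_cat inE negb_or H2 eq_sym.
Qed.

Lemma e_tab_lower i T u v : read_word T = u ++ v -> i \notin u ->
  minus_matched (sign_word i v) -> i.+1 \in u ->
  exists T' u' v', [/\ e_tab i T = Some T', shape T' = shape T &
    [/\ read_word T' = u' ++ v', i \notin u', minus_matched (sign_word i v'),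
         count_mem i.+1 u' = (count_mem i.+1 u).-1 &
         map (lower_letter i) u' ++ v' = map (lower_letter i) u ++ v]].
Proof.
move=> RW Hu Hv /split_last_occurrence [u1 [u2 [Eu H2]]].
move: Hu; rewrite Eu mem_cat in_cons !negb_or => /and3P[H1 _ H22].
have E : e_word i (read_word T) = Some (u1 ++ i :: u2 ++ v).
  by rewrite RW Eu -catA cat_cons e_word_lower.
have [|T' [E1 E2 E3]] := e_tab_word E; first by rewrite RW Eu -catA cat_cons !size_cat.
exists T', u1, (i :: u2 ++ v); split => //; split => //.
- have Nu2 : sign_word i u2 = [::].
    by rewrite -(signature_from_signs _ _ 0) signature_from_nil.
  by rewrite sign_word_cons eqxx /= sign_word_cat Nu2; apply: minus_matched_plus.
- by rewrite count_cat /= eqxx (count_memPn H2) addn0 addn1.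
- by rewrite map_cat /= (map_lower_letter_id H2) /lower_letter eqxx -catA.
Qed.

Lemma e_iterS i n T : e_iter i n.+1 T = obind (e_iter i n) (e_tab i T).
Proof.
rewrite /e_iter iterSr /=; case: (e_tab i T) => //=.
by elim: n => //= n ->.
Qed.

Lemma e_iter_lower i A T u v : read_word T = u ++ v -> i \notin u ->
  minus_matched (sign_word i v) -> count_mem i.+1 u = A ->
  [/\ forall n, n <= A -> e_iter i n T != None, e_iter i A.+1 T = None &
      exists2 Tf, e_iter i A T = Some Tf &
        read_word Tf = map (lower_letter i) u ++ v /\ shape Tf = shape T].
Proof.
elim: A T u v => [|A IH] T u v RW Hu Hv HA.
  have Hn : i.+1 \notin u by apply/count_memPn.
  split; first by move=> n; rewrite leqn0 => /eqP ->.
    by rewrite e_iterS /e_tab RW e_word_stop.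
  by exists T; rewrite ?map_lower_letter_id.
have Hin : i.+1 \in u by rewrite -has_pred1 has_count HA.
have [T' [u' [v' [Estep Eshape [RW' Hu' Hv' Hcount Hmap]]]]] :=
  e_tab_lower RW Hu Hv Hin.
have HA' : count_mem i.+1 u' = A by rewrite Hcount HA.
have [Hdef Hundef [Tf Hlast [Hread Hshape]]] := IH T' u' v' RW' Hu' Hv' HA'.
split; first by case=> [|n] Hn //; rewrite e_iterS Estep Hdef.
  by rewrite e_iterS Estep.
by exists Tf; rewrite ?e_iterS ?Estep ?Hread ?Hmap ?Hshape ?Eshape.
Qed.

Lemma eps_max_eq i A T : (forall n, n <= A -> e_iter i n T != None) ->
  e_iter i A.+1 T = None -> A <= size (read_word T) -> eps_max i T = A.
Proof.
move=> Hle Hgt HA; apply/eqP; rewrite eqn_leq; apply/andP; split.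
  apply/bigmax_leqP => a; rewrite leqNgt; apply: contraL => /subnK <-.
  rewrite /e_iter iterD -/(e_iter i A.+1 T) Hgt negbK.
  by elim: (a - A.+1) => //= n /eqP ->.
exact: (@leq_bigmax_cond _ _ (fun a : 'I__ => val a) (Ordinal (HA : A < _.+1)) (Hle A _)).
Qed.

Lemma eps_lower i T u v T2 : read_word T = u ++ v -> i \notin u ->
  minus_matched (sign_word i v) ->
  read_word T2 = map (lower_letter i) u ++ v -> shape T2 = shape T ->
  eps_max i T = count_mem i.+1 u /\ odflt T (e_iter i (eps_max i T) T) = T2.
Proof.
move=> RW Hu Hv R2 S2.
have [Hdef Hundef [Tf Hlast [Hread Hshape]]] := e_iter_lower RW Hu Hv (erefl _).
have -> : eps_max i T = count_mem i.+1 u.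
  apply: eps_max_eq => //; rewrite RW size_cat.
  exact: leq_trans (count_size _ _) (leq_addr _ _).
by split => //; rewrite Hlast; apply: read_word_shape_inj; rewrite ?Hread ?Hshape.
Qed.

(* For the block (e_k, ..., e_1) of the long word we track the tableau in
   which every entry x <= k of row p has been lowered to p, and every entry
   k+1 of row p to max p M. *)
Definition lower_entry (k M p x : nat) : nat :=
  if x <= k then p else if x == k.+1 then maxn p M else x.

Fixpoint lower_col (k M p : nat) (c : seq nat) : seq nat :=
  match c with
  | [::] => [::]
  | x :: c' => lower_entry k M p x :: lower_col k M p.+1 c'
  end.

Definition lowered (k M : nat) (T : tableau) : tableau := map (lower_col k M 1) T.

Ltac lower_entry_arith :=
  rewrite /lower_entry /=;
  repeat (first [case: ifP => ? | case: eqP => ?]); lia.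

Lemma size_lower_col k M p c : size (lower_col k M p c) = size c.
Proof. by elim: c p => //= x c IH p; rewrite IH. Qed.

(* In the column lemmas, c is the part of a strictly increasing column that
   starts at row p, just below the entry x0; p <= x0.+1 says that entries
   are at least their row index. *)

Lemma lower_col_id p x0 c : path ltn x0 c -> p <= x0.+1 -> 1 <= p ->
  lower_col 1 2 p c = c.
Proof.
elim: c p x0 => //= x c IH p x0 /andP[Hx Hc] Hp H1.
by rewrite (IH p.+1 x) //; [congr cons; lower_entry_arith | lia].
Qed.

Lemma lower_col_next k p x0 c : path ltn x0 c -> p <= x0.+1 -> 1 <= p ->
  lower_col k 1 p c = lower_col k.+1 k.+2 p c.
Proof.
elim: c p x0 => //= x c IH p x0 /andP[Hx Hc] Hp H1.
by rewrite (IH p.+1 x) //; [congr cons; lower_entry_arith | lia].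
Qed.

Lemma lower_col_low_rows k m p c : m <= k -> m.+2 <= p ->
  all (fun y => m.+1 < y) (lower_col k m.+1 p c) /\
  lower_col k m.+1 p c = lower_col k m p c.
Proof.
move=> Hm; elim: c p => //= x c IH p Hp.
have [-> ->] := IH p.+1 (leqW Hp).
by split; [rewrite andbT | congr cons]; lower_entry_arith.
Qed.

Lemma sign_word_high m s : all (fun y => m.+1 < y) s -> sign_word m s = [::].
Proof.
elim: s => //= y s IH /andP[Hy Hs]; rewrite sign_word_cons IH //.
by rewrite (_ : _ || _ = false) //; apply/negbTE; lia.
Qed.

Lemma lower_col_below_full k m x0 c : path ltn x0 c -> x0 <= k -> 1 <= m <= k ->
  lower_col k m.+1 m.+1 c = lower_col k m m.+1 c /\
  minus_matched (true :: sign_word m (lower_col k m.+1 m.+1 c)).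
Proof.
case: c => [|y c] //= /andP[Hy Hc] Hx0 Hm.
have [Hhigh Elow] := @lower_col_low_rows k m m.+2 c (ltac:(lia)) (leqnn _).
have -> : lower_entry k m.+1 m.+1 y = lower_entry k m m.+1 y by lower_entry_arith.
have Hge : m.+1 <= lower_entry k m m.+1 y by lower_entry_arith.
rewrite sign_word_cons (sign_word_high Hhigh) cats0 Elow (gtn_eqF Hge); split => //.
by case: ifP => //=; case: eqP.
Qed.

Lemma lower_col_full k m p x0 c : path ltn x0 c -> p <= x0.+1 -> 1 <= m <= k ->
  p <= m -> m - p < size c -> nth 0 c (m - p) <= k ->
  [/\ lower_col k m.+1 p c = lower_col k m p c,
      count_mem k.+1 (take (m.+1 - p) c) = 0 &
      minus_matched (sign_word m (lower_col k m.+1 p c))].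
Proof.
move=> + + Hm.
elim: c p x0 => [|x c IH] p x0 //= /andP[Hx Hc] Hp Hpm Hs Hn.
have Hxk : x <= k.
  case: (ltngtP p m) => [Hlt|Hgt|Epm]; [|lia|by move: Hn; rewrite Epm subnn].
  move: Hs Hn; rewrite (_ : m - p = (m - p.+1).+1) /=; last by lia.
  move=> Hs Hn; apply: leq_trans Hn; apply: ltnW.
  by have /allP := order_path_min ltn_trans Hc; apply; apply: mem_nth.
have Hg M : lower_entry k M p x = p by rewrite /lower_entry Hxk.
have Hxk1 : (x == k.+1) = false by apply/negbTE/eqP; lia.
rewrite !Hg sign_word_cons.
case: (ltngtP p m) => [Hlt|Hgt|Epm]; [|lia|].
  move: Hs Hn; rewrite (_ : m - p = (m - p.+1).+1) /=; last by lia.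
  move=> Hs Hn; have [Heq Hcount Hsign] := IH p.+1 x Hc (ltac:(lia)) Hlt Hs Hn.
  rewrite Heq (_ : m.+1 - p = (m.+1 - p.+1).+1) /= ?Hxk1; last by lia.
  have -> : (p == m.+1) = false by apply/negbTE; lia.
  by rewrite Hcount -Heq.
subst p; have [Heq Hsign] := lower_col_below_full Hc Hxk Hm.
by rewrite Heq subSnn /= Hxk1 take0 -Heq.
Qed.

Lemma lower_entry_partial k m p x x0 : 1 <= m <= k -> x0 < x -> p <= x0.+1 ->
  (p = m -> k < x) -> (p = m.+1 -> k < x0) ->
  [/\ lower_entry k m.+1 p x != m,
      lower_letter m (lower_entry k m.+1 p x) = lower_entry k m p x &
      (lower_entry k m.+1 p x == m.+1) = (p <= m) && (x == k.+1)].
Proof.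
move=> *; rewrite /lower_entry /lower_letter.
case: (leqP x k) => ?; last case: (eqVneq x k.+1) => ?; split; try case: ifP => ?; lia.
Qed.

Lemma lower_col_partial k m p x0 c : path ltn x0 c -> p <= x0.+1 -> 1 <= m <= k ->
  (forall t, t < size c -> p + t = m -> k < nth 0 c t) -> (p = m.+1 -> k < x0) ->
  [/\ m \notin lower_col k m.+1 p c,
      map (lower_letter m) (lower_col k m.+1 p c) = lower_col k m p c &
      count_mem m.+1 (lower_col k m.+1 p c) = count_mem k.+1 (take (m.+1 - p) c)].
Proof.
move=> + + Hm; elim: c p x0 => [|x c IH] p x0 //= /andP[Hx Hc] Hp Hrow_m Hprev.
have Hx_m : p = m -> k < x by move=> E; apply: (Hrow_m 0) => //; rewrite addn0.
have [Hno_m Hmap Hcount] : [/\ m \notin lower_col k m.+1 p.+1 c,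
    map (lower_letter m) (lower_col k m.+1 p.+1 c) = lower_col k m p.+1 c &
    count_mem m.+1 (lower_col k m.+1 p.+1 c) = count_mem k.+1 (take (m.+1 - p.+1) c)].
  apply: IH Hc _ _ (fun E => Hx_m (succn_inj E)); first by lia.
  by move=> t Ht Et; apply: (Hrow_m t.+1) => //; lia.
have [Hx_ne Hx_map Hx_count] := lower_entry_partial Hm Hx Hp Hx_m Hprev.
rewrite in_cons (negbTE Hno_m) Hmap Hcount orbF eq_sym (negbTE Hx_ne) Hx_map Hx_count.
case E: (m.+1 - p) => [|t] /=.
  have -> : m.+1 - p.+1 = 0 by lia.
  by rewrite take0 (_ : p <= m = false) //; lia.
have -> : m.+1 - p.+1 = t by lia.
by rewrite (_ : p <= m = true) //; lia.
Qed.

Lemma path_geq_blocks (f : nat -> nat) x0 l : path geq x0 l ->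
  path geq x0 (flatten [seq nseq (f h).+1 h | h <- l]).
Proof.
have path_nseq n h : path geq h (nseq n h) by elim: n => //= n ->; rewrite leqnn.
elim: l x0 => //= h l IH x0 /andP[H1 H2]; rewrite cat_path /= H1 path_nseq /=.
by rewrite (_ : last h _ = h) ?IH //; elim: (f h).
Qed.

Lemma shape_lr_sorted r lam : sorted geq (shape_lr r lam).
Proof.
have : sorted geq (rev (iota 1 r)) by rewrite rev_sorted; apply: iota_sorted.
rewrite /shape_lr; case: (rev (iota 1 r)) => [|h l] //= S.
by have /= := @path_geq_blocks lam h (h :: l); rewrite leqnn S; apply.
Qed.

Lemma read_word_cat (A B : tableau) : read_word (A ++ B) = read_word B ++ read_word A.
Proof. by rewrite /read_word rev_cat flatten_cat. Qed.

Lemma shape_lowered k M T : shape (lowered k M T) = shape T.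
Proof. by rewrite /shape -map_comp; apply/eq_map => c /=; rewrite size_lower_col. Qed.

Lemma count_read_word (P : pred nat) (S : tableau) :
  count P (read_word S) = \sum_(c <- S) count P c.
Proof. by rewrite /read_word count_flatten map_rev sumn_rev sumnE big_map. Qed.

Definition full_to (m k : nat) (c : seq nat) : bool :=
  (m <= size c) && (nth 0 c m.-1 <= k).

Section Tableau.
Variables (r : nat) (lam : nat -> nat) (T : tableau).
Hypothesis HT : in_B_lam_rho r lam T.

Lemma column_path c : c \in T -> path ltn 0 c.
Proof.
case: HT => _ Hent Hsort _ Hc; have := Hsort c Hc; have := Hent c Hc.
by case: c Hc => [|x c] //= _ Hx ->; rewrite andbT; case/andP: (Hx x (mem_head _ _)).
Qed.

Lemma column_height_mono p q : p <= q < size T ->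
  size (nth [::] T q) <= size (nth [::] T p).
Proof.
case: HT => Hsh _ _ _ /andP[Hpq Hq]; have S := shape_lr_sorted r lam.
rewrite -Hsh in S; have Hp := leq_ltn_trans Hpq Hq.
have geq_trans : transitive geq by move=> y x z H1 H2; apply: leq_trans H2 H1.
have := sorted_leq_nth geq_trans (@leqnn) 0 S.
move=> /(_ p q); rewrite !inE !size_map => /(_ Hp Hq Hpq).
by rewrite !(nth_map [::]).
Qed.

(* Columns to the left of a column full to row m are full to row m as well
   (heights decrease, rows weakly increase). *)
Lemma full_to_left m k p q : 1 <= m -> p <= q < size T ->
  full_to m k (nth [::] T q) -> full_to m k (nth [::] T p).
Proof.
move=> Hm Hpq /andP[Hs Hn]; have Hh := column_height_mono Hpq.
case: HT => _ _ _ Hrow; apply/andP; split; first exact: leq_trans Hh.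
case/andP: Hpq => Hpq Hq; case: (ltngtP p q) Hpq => // [Hlt|->] _ //.
by apply: leq_trans Hn; apply: Hrow; [rewrite Hlt | apply: leq_trans Hs; lia].
Qed.

(* The columns full to row m form a prefix of T; cut T there. *)
Section Step.
Variables (m k : nat).
Hypothesis Hm : 1 <= m <= k.
Let L := find (fun c => ~~ full_to m k c) T.

Lemma full_prefix c : c \in take L T -> full_to m k c.
Proof.
move=> Hc; apply/negPn/negP => Hn.
have : has (fun c => ~~ full_to m k c) (take L T) by apply/hasP; exists c.
by rewrite has_take_leq ?find_size // ltnn.
Qed.

Lemma partial_suffix c : c \in drop L T -> ~~ full_to m k c.
Proof.
case/(nthP [::]) => i; rewrite size_drop nth_drop => Hi <-; apply/negP => Hfull.
have HL : L < size T by rewrite -subn_gt0 (leq_ltn_trans (leq0n i) Hi).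
have := @nth_find _ [::] (fun c => ~~ full_to m k c) T; rewrite has_find => /(_ HL).
rewrite (@full_to_left m k L (L + i)) //; first by case/andP: Hm.
by rewrite leq_addr /= -ltn_subRL.
Qed.

Lemma lower_full_column c : c \in T -> full_to m k c ->
  [/\ lower_col k m.+1 1 c = lower_col k m 1 c, count_mem k.+1 (take m c) = 0 &
      minus_matched (sign_word m (lower_col k m.+1 1 c))].
Proof.
move=> Hc /andP[Hs Hn]; have Hm1 : 1 <= m by case/andP: Hm.
have := @lower_col_full k m 1 0 c (column_path Hc) (leqnn _) Hm Hm1.
by rewrite !subn1 /= prednK //; apply.
Qed.

Lemma lower_partial_column c : c \in T -> ~~ full_to m k c ->
  [/\ m \notin lower_col k m.+1 1 c,
      map (lower_letter m) (lower_col k m.+1 1 c) = lower_col k m 1 c &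
      count_mem m.+1 (lower_col k m.+1 1 c) = count_mem k.+1 (take m c)].
Proof.
move=> Hc Hpart; have Hm1 : 1 <= m by case/andP: Hm.
have := @lower_col_partial k m 1 0 c (column_path Hc) (leqnn _) Hm.
rewrite subn1 /=; apply; last by move=> [E]; move: Hm1; rewrite -E.
move=> t Ht Et; move: Hpart; rewrite /full_to -Et /= negb_and -ltnNge ltnS.
by rewrite leqNgt Ht /= -ltnNge.
Qed.

(* Applying e_m maximally to lowered k (m+1) T: the letters m+1 sit in the
   partial columns (read first, without letters m), the full columns give
   minus-matched signs; so e_m fires bold_a T m k times and lowers them. *)
Lemma lowered_step :
  eps_max m (lowered k m.+1 T) = bold_a T m k /\
  odflt (lowered k m.+1 T) (e_iter m (eps_max m (lowered k m.+1 T)) (lowered k m.+1 T)) =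
  lowered k m T.
Proof.
set u := read_word (lowered k m.+1 (drop L T)).
set v := read_word (lowered k m.+1 (take L T)).
have RW : read_word (lowered k m.+1 T) = u ++ v.
  by rewrite -{1}(cat_take_drop L T) /lowered map_cat read_word_cat.
have Hu : m \notin u.
  apply/count_memPn; rewrite count_read_word big_map big1_seq // => c /andP[_ Hc].
  by have [/count_memPn] := lower_partial_column (mem_drop Hc) (partial_suffix Hc).
have Hv : minus_matched (sign_word m v).
  rewrite sign_word_flatten; apply/minus_matched_flatten/allP => s /mapP [w].
  rewrite mem_rev => /mapP [c Hc ->] ->.
  by have [] := lower_full_column (mem_take Hc) (full_prefix Hc).
have Hfull : lowered k m.+1 (take L T) = lowered k m (take L T).
  apply/eq_in_map => c Hc.
  by have [] := lower_full_column (mem_take Hc) (full_prefix Hc).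
have R2 : read_word (lowered k m T) = map (lower_letter m) u ++ v.
  rewrite -{1}(cat_take_drop L T) /lowered map_cat read_word_cat.
  rewrite -[map _ (take L T)]/(lowered k m _) -Hfull /u /read_word.
  rewrite map_flatten map_rev -map_comp; congr (flatten (rev _) ++ _).
  apply/eq_in_map => c Hc /=.
  by have [] := lower_partial_column (mem_drop Hc) (partial_suffix Hc).
have Hsh : shape (lowered k m T) = shape (lowered k m.+1 T).
  by rewrite !shape_lowered.
have [-> ->] := eps_lower RW Hu Hv R2 Hsh.
split => //; rewrite /bold_a -{1}(cat_take_drop L T) big_cat /=.
rewrite big1_seq ?add0n => [|c /andP[_ Hc]]; last first.
  by have [] := lower_full_column (mem_take Hc) (full_prefix Hc).
rewrite count_read_word big_map; apply: eq_big_seq => c Hc.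
by have [] := lower_partial_column (mem_drop Hc) (partial_suffix Hc).
Qed.
End Step.

(* Entries of a semistandard column are at least their row index, so
   lowering 1 (and 2 to at least row 2) leaves T unchanged. *)
Lemma lowered_id : lowered 1 2 T = T.
Proof.
rewrite /lowered -[RHS]map_id; apply/eq_in_map => c Hc.
exact: lower_col_id (column_path Hc) _ _.
Qed.

Lemma lowered_next k : lowered k 1 T = lowered k.+1 k.+2 T.
Proof. by apply/eq_in_map => c Hc; apply: lower_col_next (column_path Hc) _ _. Qed.

Lemma bzl_block m k rest : m <= k ->
  bzl_aux (rev (iota 1 m) ++ rest) (lowered k m.+1 T) =
  [seq bold_a T j k | j <- rev (iota 1 m)] ++ bzl_aux rest (lowered k 1 T).
Proof.
elim: m => [|m IH] Hmk //.
have -> : rev (iota 1 m.+1) = m.+1 :: rev (iota 1 m).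
  by rewrite -[m.+1]addn1 iotaD rev_cat /= addnC.
rewrite /=.
have [-> ->] := @lowered_step m.+1 k (Hmk : 0 < m.+1 <= k).
by rewrite IH // ltnW.
Qed.

Lemma bzl_blocks s n : 1 <= s ->
  bzl_aux (flatten [seq rev (iota 1 k) | k <- iota s n]) (lowered s s.+1 T) =
  flatten [seq [seq bold_a T j k | j <- rev (iota 1 k)] | k <- iota s n].
Proof. by elim: n s => [|n IH] s Hs //=; rewrite bzl_block // lowered_next IH. Qed.

Lemma bzl_formula :
  bzl r T = flatten [seq [seq bold_a T j k | j <- rev (iota 1 k)] | k <- iota 1 r].
Proof. by rewrite /bzl /long_word -{1}lowered_id bzl_blocks. Qed.
End Tableau.

Lemma nth_triangular (f : nat -> nat -> nat) n i j : 1 <= j <= i -> i <= n ->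
  nth 0 (flatten [seq [seq f l k | l <- rev (iota 1 k)] | k <- iota 1 n])
    ((i * i.-1) %/ 2 + j).-1 = f (i - j + 1) i.
Proof.
move=> /andP[Hj Hi] Hin.
have blocks_size m :
    size (flatten [seq [seq f l k | l <- rev (iota 1 k)] | k <- iota 1 m]) =
    sumn (iota 1 m).
  rewrite size_flatten /shape -map_comp; congr sumn.
  by rewrite -[RHS]map_id; apply/eq_map => k /=; rewrite size_map size_rev size_iota.
have gauss m : sumn (iota 1 m) = (m * m.+1) %/ 2.
  suff E : 2 * sumn (iota 1 m) = m * m.+1 by rewrite -E mulKn.
  elim: m => // m IH; rewrite -[m.+1]addn1 iotaD sumn_cat /= mulnDr IH add1n; lia.
have Er : iota 1 n = iota 1 i.-1 ++ i :: iota i.+1 (n - i).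
  have E0 : n = i.-1 + (n - i).+1 by lia.
  by rewrite {1}E0 iotaD /= (_ : 1 + i.-1 = i) //; lia.
have Ei : (i * i.-1) %/ 2 = sumn (iota 1 i.-1) by rewrite gauss prednK 1?mulnC; lia.
rewrite Er map_cat flatten_cat nth_cat blocks_size Ei /=.
rewrite ifF; last by apply/negbTE; lia.
rewrite nth_cat size_map size_rev size_iota ifT; last by lia.
rewrite (nth_map 0) ?size_rev ?size_iota; last by lia.
rewrite nth_rev ?size_iota; last by lia.
rewrite nth_iota; last by lia.
by congr f; lia.
Qed.

Lemma bzl_entry_formula r lam T i j : in_B_lam_rho r lam T -> 1 <= j <= i -> i <= r ->
  bzl_entry r T i j = bold_a T (i - j + 1) i.
Proof. by move=> HT Hji Hir; rewrite /bzl_entry Hji (bzl_formula HT) nth_triangular. Qed.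

Lemma bold_a_row0 T k : bold_a T 0 k = 0.
Proof. by rewrite /bold_a big1_seq // => c _; rewrite take0. Qed.

Theorem mainTheorem2 (r : nat) (lam : nat -> nat) (T : tableau) :
  1 <= r -> in_B_lam_rho r lam T ->
  forall i j, 1 <= j -> j <= i -> i <= r ->
    circled_CI r T i j = circled_CII T (i - j + 1) i.
Proof.
move=> _ HT i j Hj Hji Hir.
rewrite /circled_CI /circled_CII (bzl_entry_formula HT) ?Hj //.
case: (ltngtP j i) Hji => // [Hlt|Hji] _.
  rewrite (bzl_entry_formula HT) ?Hlt //; congr (_ == bold_a T _ i); lia.
(* the convention a_{i,i+1} = 0 matches bold_a T 0 i = 0 *)
by rewrite Hji /bzl_entry ltnn andbF subnn bold_a_row0.
Qed.
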